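(* Let $\mathbb{K}$ be a field of characteristic zero, let $u,v\in\mathbb{K}$ with $uv\neq 0$, let $a_1,\dots,a_\ell\in\mathbb{K}$, and let $\alpha_1\le\alpha_2\le\dots\le\alpha_\ell$ and $\beta_1,\dots,\beta_\ell$ be nonnegative integers. Let \[P=\sum_{j=1}^{\ell} a_j X^{\alpha_j}(uX+v)^{\beta_j}\in\mathbb{K}[X].\] If $P\neq 0$, then \[\operatorname{val}(P)\le \max_{1\le j\le \ell}\left(\alpha_j+\binom{\ell+1-j}{2}\right).\]
   Context: For a nonzero polynomial $P\in\mathbb{K}[X]$, its valuation $\operatorname{val}(P)$ is the largest integer $v$ such that $X^v$ divides $P$. *)

From HB Require Import structures.
From mathcomp Require Import all_boot all_order all_algebra.
Set Implicit Arguments. Unset Strict Implicit. Unset Printing Implicit Defensive.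
Import GRing.Theory.
Local Open Scope ring_scope.

(* val P : the largest v such that 'X^v divides P (P nonzero).
   For P != 0, 'X^v %| P forces v < size P, so the max over v < size P
   is exactly the largest such v. *)
Definition poly_val (K : fieldType) (P : {poly K}) : nat :=
  (\max_(v < size P | ('X^v %| P)%R) v)%N.

From HB Require Import structures.
From mathcomp Require Import all_boot all_order all_algebra.
From mathcomp Require Import perm ring zify.
Import GRing.Theory.
Local Open Scope ring_scope.
Set Implicit Arguments. Unset Strict Implicit.

(* The proof
   uses the Wronskian W of a family of polynomials with respect to the Euler
   operator theta = X d/dX, which acts on X^w h as h |-> w h + X h' does on h.
   - Pulling X^(w_i) out of the i-th column shows that X^(sum w_i) divides W;
     in characteristic 0, when the valuations w_i are distinct, the remaining
     determinant evaluated at 0 is a Vandermonde determinant, so W != 0.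
   - Gaussian elimination on valuations then shows that a linearly
     independent family has a nonzero Wronskian.
   - For the family X^(al_i) T^(be_i) one has
     T^'C(k,2) W = X^(sum al_i) T^(sum be_i) D with deg D <= 'C(k,2).  Replacing
     the first member by P multiplies W by a_0 and makes it divisible by
     X^(val P + al_1 + ... + al_(k-1)); as T is coprime to X this yields
     val P <= al_0 + 'C(k,2) when a_0 != 0 and W != 0.
   - The theorem follows by induction on the number of terms: a term is
     deleted when its coefficient vanishes or the family is dependent. *)

Section EulerOperator.
Variable R : comNzRingType.
Implicit Types (p q h : {poly R}) (c : R).

Definition euler p := 'X * p^`().
Definition euler_iter (r : nat) p := iter r euler p.

Lemma eulerD p q : euler (p + q) = euler p + euler q.
Proof. by rewrite /euler derivD mulrDr. Qed.

Lemma eulerZ c p : euler (c *: p) = c *: euler p.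
Proof. by rewrite /euler derivZ scalerAr. Qed.

Lemma eulerM p q : euler (p * q) = euler p * q + p * euler q.
Proof. by rewrite /euler derivM; ring. Qed.

Lemma eulerXn n : euler 'X^n = n%:R *: 'X^n.
Proof.
rewrite /euler derivXn; case: n => [|n]; first by rewrite mulr0n mulr0 scale0r.
by rewrite mulrnAr -exprS scaler_nat.
Qed.

Lemma euler_iter_linear r I (s : seq I) (c : I -> R) (f : I -> {poly R}) :
  euler_iter r (\sum_(i <- s) c i *: f i) = \sum_(i <- s) c i *: euler_iter r (f i).
Proof.
elim: r => [|r IH] //=; rewrite IH.
elim/big_rec2: _ => [|i y1 y2 _ <-]; first by rewrite /euler deriv0 mulr0.
by rewrite eulerD eulerZ.
Qed.

(* On X^w h the Euler operator acts as the twisted operator h |-> w h + X h',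
   whose value at 0 is multiplied by w at each step. *)
Definition euler_shift (w : nat) h := w%:R *: h + euler h.

Lemma euler_iter_Xn w h r :
  euler_iter r ('X^w * h) = 'X^w * iter r (euler_shift w) h.
Proof.
elim: r => //= r IH; rewrite IH eulerM eulerXn /euler_shift.
by rewrite -scalerAl mulrDr scalerAr.
Qed.

Lemma euler_shift_iter_at0 w h r :
  (iter r (euler_shift w) h).[0] = w%:R ^+ r * h.[0].
Proof.
elim: r => [|r IH] /=; first by rewrite mul1r.
by rewrite hornerD hornerZ IH /euler hornerM hornerX mul0r addr0 exprS mulrA.
Qed.

Lemma size_deriv_leq (p : {poly R}) : (size p^`() <= (size p).-1)%N.
Proof.
have [->|p_nz] := eqVneq p 0; first by rewrite deriv0 size_poly0.
by rewrite -ltnS prednK ?lt_size_deriv // size_poly_gt0.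
Qed.
End EulerOperator.

Section EulerOnAffinePowers.
Variable R : comNzRingType.
Variable T : {poly R}.
Variables al be : nat.

Lemma euler_pow b : T * euler (T ^+ b) = b%:R *: ('X * T^`()) * T ^+ b.
Proof.
rewrite /euler deriv_exp; case: b => [|b].
  by rewrite mulr0n mulr0 scale0r mulr0 mul0r.
by rewrite exprS -scalerAl scaler_nat; ring.
Qed.

(* The quotients Q_r with T^r euler^r (X^al T^be) = X^al T^be Q_r, defined
   by their recurrence; euler_quotE proves the defining identity by
   induction on r, using euler_pow to clear the powers of T. *)
Fixpoint euler_quot (r : nat) : {poly R} :=
  if r is r'.+1 then
    (al%:R *: T + (be%:R - r'%:R) *: ('X * T^`())) * euler_quot r'
    + 'X * T * (euler_quot r')^`()
  else 1.

Lemma euler_quotE r :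
  T ^+ r * euler_iter r ('X^al * T ^+ be) = 'X^al * T ^+ be * euler_quot r.
Proof.
set f := 'X^al * T ^+ be.
have Tf Q : T * euler (f * Q) =
    f * ((al%:R *: T + be%:R *: ('X * T^`())) * Q + 'X * T * Q^`()).
  rewrite !eulerM eulerXn [euler Q]/euler.
  transitivity (al%:R *: 'X^al * T * T ^+ be * Q + 'X^al * (T * euler (T ^+ be)) * Q
      + f * ('X * T * Q^`())); first by rewrite /f; ring.
  by rewrite euler_pow /f -!mul_polyC; ring.
elim: r => [|r IH]; first by rewrite expr0 mul1r mulr1.
rewrite /euler_iter iterS -/(euler_iter r f) exprS -mulrA.
have -> : T ^+ r * euler (euler_iter r f) =
    euler (T ^+ r * euler_iter r f) - euler (T ^+ r) * euler_iter r f.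
  by rewrite eulerM; ring.
rewrite IH mulrBr Tf mulrA euler_pow -!mulrA IH /= -!mul_polyC rmorphB /= /f.
ring.
Qed.

Hypothesis sizeT : (size T <= 2)%N.

Lemma size_euler_quot r : (size (euler_quot r) <= r.+1)%N.
Proof.
have sizeXT' : (size ('X * T^`())%R <= 2)%N.
  apply: leq_trans (size_polyMleq _ _) _; rewrite size_polyX.
  have := size_deriv_leq T; lia.
elim: r => [|r IH] /=; first by rewrite size_poly1.
apply: leq_trans (size_polyD _ _) _; rewrite geq_max; apply/andP; split.
  apply: leq_trans (size_polyMleq _ _) _.
  have : (size (al%:R *: T + (be%:R - r%:R) *: ('X * T^`()))%R <= 2)%N.
    apply: leq_trans (size_polyD _ _) _; rewrite geq_max.
    by rewrite !(leq_trans (size_scale_leq _ _)).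
  lia.
apply: leq_trans (size_polyMleq _ _) _.
have : (size ('X * T)%R <= 3)%N.
  by apply: leq_trans (size_polyMleq _ _) _; rewrite size_polyX; lia.
have := size_deriv_leq (euler_quot r); lia.
Qed.
End EulerOnAffinePowers.

Section Wronskian.
Variable R : comNzRingType.
Implicit Types (k : nat).

Definition wronskian_mx k (f : 'I_k -> {poly R}) : 'M[{poly R}]_k :=
  \matrix_(r < k, i < k) euler_iter r (f i).

Definition wronskian k (f : 'I_k -> {poly R}) : {poly R} := \det (wronskian_mx f).

Lemma wronskian_ext k (f g : 'I_k -> {poly R}) : f =1 g -> wronskian f = wronskian g.
Proof.
by move=> fg; congr determinant; apply/matrixP => r i; rewrite !mxE fg.
Qed.

Definition recombine k (f : 'I_k -> {poly R}) (M : 'M[R]_k) (j : 'I_k) :=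
  \sum_i M i j *: f i.

Lemma wronskian_recombine k (f : 'I_k -> {poly R}) M :
  wronskian (recombine f M) = wronskian f * (\det M)%:P.
Proof.
rewrite /wronskian -det_map_mx -det_mulmx; congr determinant.
apply/matrixP => r j; rewrite !mxE euler_iter_linear; apply: eq_bigr => i _.
by rewrite !mxE -mul_polyC mulrC.
Qed.

Lemma wronskian_replace_first k (f : 'I_k.+1 -> {poly R}) (a : 'I_k.+1 -> R) :
  wronskian (fun j => if j == ord0 then \sum_i a i *: f i else f j) =
  wronskian f * (a ord0)%:P.
Proof.
pose M : 'M[R]_k.+1 := \matrix_(i, j) if j == ord0 then a i else (i == j)%:R.
have recM : recombine f M =1 (fun j => if j == ord0 then \sum_i a i *: f i else f j).
  move=> j; rewrite /recombine; have [->|j_nz] := eqVneq j ord0.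
    by apply: eq_bigr => i _; rewrite mxE eqxx.
  rewrite (bigD1 j) //= mxE (negPf j_nz) eqxx scale1r big1 ?addr0 // => i ij.
  by rewrite mxE (negPf j_nz) (negPf ij) scale0r.
have detM : \det M = a ord0.
  rewrite det_trig; last first.
    apply/is_trig_mxP => i j ij; rewrite mxE.
    have j_nz : j != ord0 by rewrite -val_eqE /=; case: (val j) ij.
    by rewrite (negPf j_nz) -val_eqE (ltn_eqF ij).
  rewrite big_ord_recl mxE eqxx big1 ?mulr1 // => i _.
  by rewrite mxE eqxx.
by rewrite -(wronskian_ext recM) wronskian_recombine detM.
Qed.

Lemma wronskian_Xn_factor k (w : 'I_k -> nat) (h : 'I_k -> {poly R}) :
  wronskian (fun i => 'X^(w i) * h i) =
  \det (\matrix_(r < k, i < k) iter r (euler_shift (w i)) (h i)) * 'X^(\sum_i w i).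
Proof.
rewrite /wronskian.
have -> : wronskian_mx (fun i => 'X^(w i) * h i) =
    \matrix_(r < k, i < k) iter r (euler_shift (w i)) (h i) *m diag_mx (\row_i 'X^(w i)).
  by apply/matrixP => r i; rewrite mul_mx_diag !mxE euler_iter_Xn mulrC.
rewrite det_mulmx det_diag -prodrXr; congr (_ * _).
by apply: eq_bigr => i _; rewrite mxE.
Qed.

(* A determinant whose r-th row has entries of degree at most r has degree
   at most 0 + 1 + ... + (k-1) = 'C(k, 2). *)
Lemma size_det_staircase k (A : 'M[{poly R}]_k) :
  (forall r i, size (A r i) <= r.+1)%N -> (size (\det A) <= 'C(k, 2).+1)%N.
Proof.
move=> sizeA; rewrite -bin2_sum big_mkord /determinant.
apply: (big_ind (fun p : {poly R} => size p <= (\sum_(r < k) r).+1)%N).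
- by rewrite size_poly0.
- by move=> p q sp sq; apply: leq_trans (size_polyD _ _) _; rewrite geq_max sp sq.
move=> s _.
have size_prod : (size (\prod_i A i (s i))%R <= (\sum_(r < k) r).+1)%N.
  apply: (big_ind2 (fun (p : {poly R}) (n : nat) => size p <= n.+1)%N).
  - by rewrite size_poly1.
  - by move=> p1 n1 p2 n2 s1 s2; apply: leq_trans (size_polyMleq _ _) _; lia.
  by move=> i _; apply: sizeA.
by rewrite mulr_sign; case: ifP; rewrite ?size_polyN.
Qed.

(* The Wronskian of the family X^(al i) T^(be i) for T of degree at most 1:
   multiplying row r by T^r turns column i into X^(al i) T^(be i) times the
   column of the Q_r, whose determinant has degree at most 'C(k, 2). *)
Lemma wronskian_affine_monomials k (T : {poly R}) (al be : 'I_k -> nat) :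
  (size T <= 2)%N ->
  exists2 D : {poly R}, (size D <= 'C(k, 2).+1)%N &
    T ^+ 'C(k, 2) * wronskian (fun i => 'X^(al i) * T ^+ (be i)) =
    'X^(\sum_i al i) * T ^+ (\sum_i be i) * D.
Proof.
move=> sizeT; pose Q := \matrix_(r < k, i < k) euler_quot T (al i) (be i) r.
exists (\det Q); first by apply: size_det_staircase => r i; rewrite mxE size_euler_quot.
have QE : diag_mx (\row_(r < k) T ^+ r) *m wronskian_mx (fun i => 'X^(al i) * T ^+ (be i))
    = Q *m diag_mx (\row_i ('X^(al i) * T ^+ (be i))).
  apply/matrixP => r i; rewrite mul_mx_diag mul_diag_mx !mxE.
  by rewrite euler_quotE mulrC.
have := congr1 determinant QE; rewrite !det_mulmx !det_diag.
have -> : \prod_i (\row_(r < k) T ^+ r) 0 i = T ^+ 'C(k, 2).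
  by rewrite -bin2_sum big_mkord -prodrXr; apply: eq_bigr => i _; rewrite mxE.
rewrite /wronskian => ->; rewrite -!prodrXr -big_split /= mulrC; congr (_ * _).
by apply: eq_bigr => i _; rewrite mxE.
Qed.
End Wronskian.

Section Valuation.
Variable K : fieldType.
Implicit Types p : {poly K}.

Lemma dvdp_XnP n p : reflect (forall i, (i < n)%N -> p`_i = 0) ('X^n %| p).
Proof.
apply: (iffP idP) => [/dvdpP[q ->] i lt_in | low0]; first by rewrite coefMXn lt_in.
apply/dvdpP; exists (drop_poly n p); apply/polyP => i.
by rewrite coefMXn coef_drop_poly; case: ltnP => [/low0 | /subnK ->].
Qed.

Lemma poly_val_max n p : p != 0 -> 'X^n %| p -> (n <= poly_val p)%N.
Proof.
move=> p_nz dvd; have := dvdp_leq p_nz dvd; rewrite size_polyXn => n_lt.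
exact: (leq_bigmax_cond (Ordinal n_lt) dvd).
Qed.

Lemma poly_val_dvdp p : p != 0 -> 'X^(poly_val p) %| p.
Proof.
rewrite -size_poly_gt0 => s_gt0.
rewrite /poly_val (bigmax_eq_arg (Ordinal s_gt0)) ?expr0 ?dvd1p //.
by case: arg_maxnP; rewrite ?expr0 ?dvd1p.
Qed.

Lemma poly_val_lt_size p : p != 0 -> (poly_val p < size p)%N.
Proof.
by move=> p_nz; have := dvdp_leq p_nz (poly_val_dvdp p_nz); rewrite size_polyXn.
Qed.

Lemma coef_poly_val p : p != 0 -> p`_(poly_val p) != 0.
Proof.
move=> p_nz; apply/eqP => coef0.
suff /(poly_val_max p_nz) : 'X^((poly_val p).+1) %| p by rewrite ltnn.
apply/dvdp_XnP => i; rewrite ltnS leq_eqVlt => /orP[/eqP -> //|].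
exact/dvdp_XnP/poly_val_dvdp.
Qed.

Lemma poly_val_quot p : p != 0 -> (p %/ 'X^(poly_val p)).[0] != 0.
Proof.
move=> p_nz; have := coef_poly_val p_nz.
by rewrite -{1}(divpK (poly_val_dvdp p_nz)) coefMXn ltnn subnn horner_coef0.
Qed.

Lemma dvdp_Xn_cancel p q : p != 0 -> q != 0 -> poly_val p = poly_val q ->
  'X^((poly_val q).+1) %| q - (q`_(poly_val q) / p`_(poly_val q)) *: p.
Proof.
move=> p_nz q_nz val_pq; set v := poly_val q.
have p_v : p`_v != 0 by rewrite /v -val_pq coef_poly_val.
apply/dvdp_XnP => t; rewrite ltnS coefB coefZ leq_eqVlt => /orP[/eqP ->|lt_tv].
  by rewrite divfK ?subrr.
have /dvdp_XnP/(_ t lt_tv) -> := poly_val_dvdp q_nz.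
move: lt_tv; rewrite /v -val_pq => /(dvdp_XnP _ _ (poly_val_dvdp p_nz)) ->.
by rewrite mulr0 subr0.
Qed.
End Valuation.

Section LinearIndependence.
Variable K : fieldType.
Hypothesis char0 : [pchar K] =i pred0.

Lemma pchar0_natr_inj : injective (fun n : nat => n%:R : K).
Proof.
suff le_inj m n : (m <= n)%N -> m%:R = n%:R :> K -> m = n.
  by move=> m n; case: (leqP m n) => [/le_inj//|/ltnW/le_inj le_nm /esym/le_nm].
move=> le_mn /eqP; rewrite eq_sym -subr_eq0 -natrB // (proj1 (pcharf0P _) char0).
by rewrite subn_eq0 => le_nm; apply/eqP; rewrite eqn_leq le_mn.
Qed.

(* A family of nonzero polynomials with pairwise distinct valuations has a
   nonzero Wronskian: at X = 0 its reduced determinant is a Vandermonde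
   determinant in the (distinct, by characteristic 0) valuations. *)
Lemma wronskian_distinct_val k (g : 'I_k -> {poly K}) :
  (forall i, g i != 0) -> injective (fun i => poly_val (g i)) -> wronskian g != 0.
Proof.
move=> g_nz val_inj; pose w i := poly_val (g i); pose h i := g i %/ 'X^(w i).
have gE : g =1 (fun i => 'X^(w i) * h i).
  by move=> i; rewrite mulrC divpK ?poly_val_dvdp.
rewrite (wronskian_ext gE) wronskian_Xn_factor mulf_neq0 ?expf_neq0 ?polyX_eq0 //.
set D := \det _; suff D0 : D.[0] != 0 by apply: contraTneq D0 => ->; rewrite horner0 eqxx.
rewrite /D -horner_evalE -det_map_mx.
have -> : map_mx (horner_eval 0)
    (\matrix_(r < k, i < k) iter r (euler_shift (w i)) (h i)) =
    Vandermonde k (\row_i ((w i)%:R : K)) *m diag_mx (\row_i (h i).[0]).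
  apply/matrixP => r i.
  by rewrite mul_mx_diag !mxE horner_evalE euler_shift_iter_at0.
rewrite det_mulmx det_Vandermonde det_diag mulf_neq0 //.
  apply/prodf_neq0 => i _; apply/prodf_neq0 => j lt_ij; rewrite !mxE subr_eq0.
  by apply: contraTneq lt_ij => /pchar0_natr_inj /val_inj ->; rewrite ltnn.
by apply/prodf_neq0 => i _; rewrite mxE poly_val_quot.
Qed.

Definition lin_dependent k (f : 'I_k -> {poly K}) :=
  exists c : 'I_k -> K, (exists j, c j != 0) /\ \sum_i c i *: f i = 0.

Lemma lin_dependent0 k (f : 'I_k -> {poly K}) j : f j = 0 -> lin_dependent f.
Proof.
move=> fj0; exists (fun i => (i == j)%:R); split; first by exists j; rewrite eqxx oner_neq0.
rewrite (bigD1 j) //= eqxx scale1r fj0 add0r big1 // => i /negPf ->; exact: scale0r.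
Qed.

Lemma lin_dependent_recombine k (f : 'I_k -> {poly K}) (M : 'M[K]_k) :
  M \in unitmx -> lin_dependent (recombine f M) -> lin_dependent f.
Proof.
move=> M_unit [c [[j cj_nz] rel]]; pose d := M *m \col_i c i.
exists (fun i => d i 0); split.
  apply/existsP; apply: contraTT cj_nz => /existsPn d0.
  have d_eq0 : d = 0.
    by apply/matrixP => i z; rewrite ord1 [RHS]mxE; apply/eqP/negbNE/d0.
  have /matrixP/(_ j 0) : \col_i c i = 0.
    by rewrite -(mulKmx M_unit (\col_i c i)) -/d d_eq0 mulmx0.
  by rewrite !mxE => ->; rewrite eqxx.
rewrite -[RHS]rel /recombine; under [RHS]eq_bigr do rewrite scaler_sumr.
rewrite exchange_big; apply: eq_bigr => i _; rewrite mxE scaler_suml.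
by apply: eq_bigr => r _; rewrite mxE scalerA mulrC.
Qed.

Definition shear_mx k (i j : 'I_k) (c : K) : 'M[K]_k := 1%:M - c *: delta_mx i j.

Lemma shear_mx_unit k (i j : 'I_k) c : i != j -> shear_mx i j c \in unitmx.
Proof.
move=> ij; suff /mulmx1_unit[] : shear_mx i j c *m (1%:M + c *: delta_mx i j) = 1%:M.
  by [].
rewrite mulmxDr !mulmxBl !mul1mx !mulmx1 -!scalemxAl -!scalemxAr.
by rewrite mul_delta_mx_0 1?eq_sym // !scaler0 subr0 subrK.
Qed.

Lemma recombine_shear k (g : 'I_k -> {poly K}) (i j : 'I_k) c s :
  recombine g (shear_mx i j c) s = if s == j then g j - c *: g i else g s.
Proof.
rewrite /recombine; under eq_bigr do rewrite !mxE scalerBl.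
rewrite sumrB (bigD1 s) //= eqxx scale1r big1 ?addr0 => [|r]; last first.
  by case: eqP => [->|_ _]; rewrite ?eqxx // scale0r.
rewrite (bigD1 i) //= eqxx big1 ?addr0 => [|r]; last first.
  by case: eqP => [->|_ _]; rewrite ?eqxx // mulr0 scale0r.
by case: eqP => [->|]; rewrite ?mulr1 ?mulr0 ?scale0r ?subr0.
Qed.

(* Gaussian elimination on valuations: either the family is linearly dependent,
   or it can be recombined invertibly into one with distinct valuations, and
   then its Wronskian does not vanish.  Each elimination step strictly raises
   one valuation, which is bounded by the maximal size S of the members. *)
Lemma lin_dependent_or_wronskian_neq0 k (f : 'I_k -> {poly K}) :
  lin_dependent f \/ wronskian f != 0.
Proof.
pose S := (\max_i size (f i))%N.
have : forall i, (size (f i) <= S)%N by move=> i; apply: leq_bigmax.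
pose gap (g : 'I_k -> {poly K}) := (\sum_i (S - poly_val (g i)))%N.
have [n] := ubnP (gap f); clearbody S; elim: n f => // n IH g gap_lt sizeg.
case: (pickP (fun j => g j == 0)) => [j /eqP gj0|g_nz].
  by left; apply: lin_dependent0 gj0.
have [val_inj|/injectivePn[i [j ij val_ij]]] :=
  boolP (injectiveb (fun i => poly_val (g i))).
  by right; apply: wronskian_distinct_val => [i|]; [rewrite g_nz | apply/injectiveP].
have [gi_nz gj_nz] : g i != 0 /\ g j != 0 by rewrite !g_nz.
pose c := (g j)`_(poly_val (g j)) / (g i)`_(poly_val (g j)).
pose g' := recombine g (shear_mx i j c).
have shear_unit := shear_mx_unit c ij.
suff : lin_dependent g' \/ wronskian g' != 0.
  case=> [/(lin_dependent_recombine shear_unit)|]; first by left.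
  by rewrite wronskian_recombine => W'; right; apply: contraNneq W' => ->; rewrite mul0r.
have [g'j0|g'j_nz] := eqVneq (g' j) 0; first by left; apply: lin_dependent0 g'j0.
have val_up : (poly_val (g j) < poly_val (g' j))%N.
  by apply: poly_val_max; rewrite // /g' recombine_shear eqxx dvdp_Xn_cancel.
apply: IH => [|s]; last first.
  rewrite /g' recombine_shear; case: eqP => // _.
  rewrite (leq_trans (size_polyD _ _)) // size_polyN geq_max sizeg.
  exact: leq_trans (size_scale_leq _ _) (sizeg i).
suff : (gap g' < gap g)%N by move: gap_lt; lia.
rewrite /gap (bigD1 j) //= [X in (_ < X)%N](bigD1 j) //=.
rewrite (eq_bigr (fun s => S - poly_val (g s)))%N => [|s /negPf sj]; last first.
  by rewrite /g' recombine_shear sj.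
have := leq_trans (poly_val_lt_size gj_nz) (sizeg j); lia.
Qed.
End LinearIndependence.

Section ValuationBound.
Variable K : fieldType.
Hypothesis char0 : [pchar K] =i pred0.
Variables u v : K.
Hypothesis v_nz : v != 0.
Local Notation T := (u *: 'X + v%:P).

Lemma size_affine : (size T <= 2)%N.
Proof.
rewrite (leq_trans (size_polyD _ _)) // geq_max size_polyC.
by rewrite (leq_trans (size_scale_leq _ _)) ?size_polyX //; case: (v != 0).
Qed.

Lemma affine_at0 : T.[0] = v.
Proof. by rewrite hornerD hornerZ hornerX hornerC mulr0 add0r. Qed.

Lemma affine_neq0 : T != 0.
Proof. by apply: contra_neq v_nz => T0; rewrite -affine_at0 T0 horner0. Qed.

(* T does not vanish at 0, hence is coprime to every power of X. *)
Lemma coprimep_Xn_affine n b : coprimep 'X^n (T ^+ b).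
Proof.
apply/coprimep_expl/coprimep_expr; rewrite coprimep_sym.
have := coprimep_XsubC T 0; rewrite subr0 => ->.
by rewrite /root affine_at0 v_nz.
Qed.

(* Replacing the first member by P multiplies the Wronskian
   by a_0 and makes it divisible by X^(val P + al_1 + ... + al_m), while
   T^'C(k,2) times the Wronskian is X^(al_0 + ... + al_m) T^B D with D of
   degree at most 'C(k, 2); cancelling X^(al_1 + ... + al_m) and T^B leaves
   X^(val P) | X^(al_0) D. *)
Lemma val_le_wronskian m (al be : 'I_m.+1 -> nat) (a : 'I_m.+1 -> K) :
  a ord0 != 0 -> wronskian (fun i => 'X^(al i) * T ^+ (be i)) != 0 ->
  \sum_i a i *: ('X^(al i) * T ^+ (be i)) != 0 ->
  (poly_val (\sum_i a i *: ('X^(al i) * T ^+ (be i))) <= al ord0 + 'C(m.+1, 2))%N.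
Proof.
set f := fun i => _; set P := \sum_i _ => a0_nz W_nz P_nz; set N := poly_val P.
pose w (j : 'I_m.+1) := if j == ord0 then N else al j.
pose h (j : 'I_m.+1) := if j == ord0 then P %/ 'X^N else T ^+ (be j).
pose alS := (\sum_(i < m) al (lift ord0 i))%N.
have wE : (\sum_j w j = N + alS)%N by rewrite big_ord_recl.
have dvdW : 'X^(N + alS) %| wronskian f.
  have gE : (fun j => if j == ord0 then P else f j) =1 (fun j => 'X^(w j) * h j).
    by move=> j; rewrite /w /h; case: eqP => _; rewrite // mulrC divpK ?poly_val_dvdp.
  have := wronskian_replace_first f a.
  rewrite (wronskian_ext gE) wronskian_Xn_factor wE => WE.
  by rewrite -(dvdpZr _ _ a0_nz) -mul_polyC mulrC -WE dvdp_mull.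
have [D sizeD WD] := wronskian_affine_monomials al be size_affine.
have D_nz : D != 0.
  apply: contra_neq W_nz => D0; move: WD; rewrite D0 mulr0 => /eqP.
  by rewrite mulf_eq0 expf_eq0 (negPf affine_neq0) andbF => /eqP.
have : 'X^N %| 'X^(al ord0) * D * T ^+ (\sum_i be i).
  rewrite -(dvdp_mul2l (r := 'X^alS)) ?expf_neq0 ?polyX_eq0 // -exprD addnC.
  have -> : 'X^alS * ('X^(al ord0) * D * T ^+ (\sum_i be i)) =
      T ^+ 'C(m.+1, 2) * wronskian f.
    have alE : (\sum_i al i = al ord0 + alS)%N by rewrite big_ord_recl.
    by rewrite WD alE exprD; ring.
  exact: dvdp_mull.
rewrite Gauss_dvdpl ?coprimep_Xn_affine // => /(dvdp_leq (mulf_neq0 _ D_nz)).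
rewrite expf_neq0 ?polyX_eq0 // size_polyXn mulrC size_mulXn // => /(_ isT).
by move=> lt_N; rewrite -ltnS (leq_trans lt_N) // -addnS leq_add2l.
Qed.

(* Deleting one member of the family can only lower the bound, since the
   remaining indices move down by at most one. *)
Lemma bound_lift m (al : 'I_m.+1 -> nat) (j : 'I_m.+1) :
  (\max_(i < m) (al (lift j i) + 'C(m - i, 2)) <=
   \max_(i < m.+1) (al i + 'C(m.+1 - i, 2)))%N.
Proof.
apply/bigmax_leqP => i _; apply: leq_trans (leq_bigmax (lift j i)).
by rewrite leq_add2l leq_bin2l // /= /bump; case: (j <= i)%N; lia.
Qed.

(* The theorem, by induction on the number of members: a member with zero
   coefficient, or one made redundant by a linear relation, is deleted;
   otherwise a_0 != 0 and the Wronskian does not vanish. *)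
Lemma poly_val_le_bound m (al be : 'I_m -> nat) (a : 'I_m -> K) :
  (forall i j : 'I_m, (i <= j)%N -> (al i <= al j)%N) ->
  \sum_i a i *: ('X^(al i) * T ^+ (be i)) != 0 ->
  (poly_val (\sum_i a i *: ('X^(al i) * T ^+ (be i))) <=
   \max_(i < m) (al i + 'C(m - i, 2)))%N.
Proof.
elim: m al be a => [|m IH] al be a al_mono; first by rewrite !big_ord0 eqxx.
set P := \sum_i _ => P_nz.
have drop_member (b : 'I_m.+1 -> K) j : b j = 0 ->
    \sum_i b i *: ('X^(al i) * T ^+ (be i)) = P ->
    (poly_val P <= \max_(i < m.+1) (al i + 'C(m.+1 - i, 2)))%N.
  move=> bj0 bP; apply: leq_trans (bound_lift al j).
  have P_lift : \sum_i b (lift j i) *: ('X^(al (lift j i)) * T ^+ (be (lift j i))) = P.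
    by rewrite -bP (bigD1_ord j) //= bj0 scale0r add0r.
  have al_lift_mono (i i' : 'I_m) : (i <= i')%N -> (al (lift j i) <= al (lift j i'))%N.
    by move=> le_ii'; apply: al_mono; rewrite /= leq_bump2.
  by have := IH _ (fun i => be (lift j i)) (fun i => b (lift j i)) al_lift_mono;
    rewrite P_lift; apply.
have [a0|a0_nz] := eqVneq (a ord0) 0; first exact: drop_member a0 _.
have [[c [[j cj_nz] rel]]|W_nz] :=
  lin_dependent_or_wronskian_neq0 char0 (fun i => 'X^(al i) * T ^+ (be i)).
  apply: (drop_member (fun i => a i - a j / c j * c i) j); first by rewrite divfK ?subrr.
  under eq_bigr do rewrite scalerBl -scalerA.
  by rewrite sumrB -scaler_sumr rel scaler0 subr0.
apply: leq_trans (val_le_wronskian a0_nz W_nz P_nz) _.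
by apply: leq_trans (leq_bigmax ord0); rewrite subn0.
Qed.
End ValuationBound.

(* Indices j = 1..l of the paper are i = 0..l-1 here (j = i+1),
   so binom(l+1-j, 2) = 'C(l - i, 2). *)
Theorem theorem2p1 (K : fieldType) (hK : [pchar K] =i pred0)
  (u v : K) (huv : u * v != 0) (l : nat)
  (a : 'I_l -> K) (alpha beta : 'I_l -> nat)
  (halpha : forall i j : 'I_l, (i <= j)%N -> (alpha i <= alpha j)%N) :
  let P := \sum_(i < l) a i *: ('X^(alpha i) * (u *: 'X + v%:P) ^+ beta i) in
  P != 0 ->
  (poly_val P <= \max_(i < l) (alpha i + 'C(l - i, 2)))%N.
Proof.
have v_nz : v != 0 by move: huv; rewrite mulf_eq0 negb_or => /andP[].
exact: poly_val_le_bound.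
Qed.
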